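(* Let $\Gamma=K_{r,t}$ be the complete bipartite graph with parts of sizes $r$ and $t$, where $t\le r$. For every integer $k\in\{2-r,\dots,r\}$: (a) if $k\ge t+1$, then $\gamma_k^o(\Gamma)=r$; (b) if $k\le t$ and $\left\lceil\frac{r+k}{2}\right\rceil+\left\lceil\frac{t+k}{2}\right\rceil\ge t$, then $\gamma_k^o(\Gamma)=t$; (c) if $-t<k\le t$ and $\left\lceil\frac{r+k}{2}\right\rceil+\left\lceil\frac{t+k}{2}\right\rceil< t$, then $\gamma_k^o(\Gamma)=\left\lceil\frac{r+k}{2}\right\rceil+\left\lceil\frac{t+k}{2}\right\rceil$; (d) if $k\le -t$ and $\left\lceil\frac{r+k}{2}\right\rceil+\left\lceil\frac{t+k}{2}\right\rceil< t$, then $\gamma_k^o(\Gamma)=\min\{t,1+\left\lceil\frac{r+k}{2}\right\rceil\}$.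
   Context: Graphs are finite and simple. For a graph $\Gamma=(V,E)$, $S\subseteq V$ and $v\in V$, $\delta_S(v)$ denotes the number of neighbours of $v$ in $S$, $\overline{S}=V\setminus S$, and $\partial(S)$ is the set of vertices of $\overline{S}$ having at least one neighbour in $S$. For an integer $k$, a nonempty set $S\subseteq V$ is an offensive $k$-alliance if $\delta_S(v)\ge\delta_{\overline{S}}(v)+k$ for every $v\in\partial(S)$. It is a global offensive $k$-alliance if moreover it is a dominating set (every vertex of $\overline{S}$ has a neighbour in $S$). $\gamma_k^o(\Gamma)$ denotes the minimum cardinality of a global offensive $k$-alliance in $\Gamma$. *)

From mathcomp Require Import all_boot all_order all_algebra.
Set Implicit Arguments. Unset Strict Implicit. Unset Printing Implicit Defensive.
Import Order.TTheory GRing.Theory Num.Theory.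

(* A simple graph: a symmetric irreflexive relation e on a finType T. *)
Section Alliances.
Variable T : finType.
Variable e : rel T.

Definition delta (S : {set T}) (v : T) : nat := #|[set u in S | e v u]|.

Definition boundary (S : {set T}) : {set T} :=
  [set v in ~: S | [exists u in S, e v u]].

Definition offensive_alliance (k : int) (S : {set T}) : bool :=
  (S != set0) &&
  [forall v in boundary S, ((delta S v)%:Z >= (delta (~: S) v)%:Z + k)%R].

Definition dominating (S : {set T}) : bool :=
  [forall v in ~: S, [exists u in S, e v u]].

Definition global_offensive_alliance (k : int) (S : {set T}) : bool :=
  offensive_alliance k S && dominating S.

(* gamma_k^o: minimum cardinality of a global offensive k-alliance
   (the whole vertex set is always one when T is nonempty, so #|T| is a
   valid default for the minimum). *)
Definition gamma_o (k : int) : nat :=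
  \big[minn/#|T|]_(S : {set T} | global_offensive_alliance k S) #|S|.
End Alliances.

Definition Kbip (r t : nat) : rel ('I_r + 'I_t)%type :=
  fun x y => match x, y with
             | inl _, inr _ | inr _, inl _ => true
             | _, _ => false
             end.

Definition ceil2 (n : int) : int := ((n + 1) %/ 2)%Z.

(* In K_{r,t} every vertex outside S is adjacent to exactly the other part,
   so whether S is a global offensive k-alliance depends only on the numbers
   a <= r and b <= t of vertices S takes from the two parts: if the left part
   is not contained in S then b >= 1 and t + k <= 2b, and symmetrically for
   the right part.  gamma_k^o is the least a + b under these integer
   constraints; it is attained at (r, 0), (0, t),
   (ceil((r+k)/2), ceil((t+k)/2)) or (ceil((r+k)/2), 1) according to the
   regime. *)
From mathcomp Require Import all_boot all_order all_algebra zify.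
Import Order.TTheory GRing.Theory Num.Theory.
Local Open Scope ring_scope.
Set Implicit Arguments. Unset Strict Implicit.

Lemma ceil2_bounds (n : int) : n <= 2 * ceil2 n <= n + 1.
Proof. rewrite /ceil2; lia. Qed.

Lemma bigmin_le (I : finType) (P : pred I) (F : I -> nat) x i :
  P i -> (\big[minn/x]_(j | P j) F j <= F i)%N.
Proof.
rewrite unlock; have : i \in index_enum I by rewrite mem_index_enum.
elim: (index_enum I) => [//|y s IH]; rewrite inE /= => /orP[/eqP <- -> |si Pi].
  exact: geq_minl.
by case: (P y); rewrite ?geq_min IH ?orbT.
Qed.

Lemma card_ord_predC n (P : pred 'I_n) : #|[pred i | ~~ P i]| = (n - #|P|)%N.
Proof.
transitivity (#|P| + #|[predC P]| - #|P|)%N; last by rewrite cardC card_ord.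
by rewrite addKn; apply: eq_card => i; rewrite !inE.
Qed.

Lemma ord_notinP n (P : pred 'I_n) : reflect (exists i, ~~ P i) (#|P| < n)%N.
Proof.
have := card_ord_predC P; have := max_card P; rewrite card_ord => Pn cPC.
apply: (iffP idP) => [ltPn | [i Pi]].
  have : (0 < #|[pred i | ~~ P i]|)%N by rewrite cPC subn_gt0.
  by case/card_gt0P => i; exists i.
have : (0 < #|[pred i | ~~ P i]|)%N by apply/card_gt0P; exists i.
by rewrite cPC subn_gt0.
Qed.

Lemma forall_notin_ord n (P : pred 'I_n) (b : bool) :
  [forall i, ~~ P i ==> b] = (#|P| == n) || b.
Proof.
case: b; first by rewrite orbT; apply/forallP => i; rewrite implybT.
have := max_card P; rewrite card_ord => le_Pn.
rewrite orbF eqn_leq le_Pn /= leqNgt.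
apply/forallP/negP => [allP /ord_notinP[i /negbTE Pi] | noP i].
  by have := allP i; rewrite Pi.
by apply/implyP => Pi; case: noP; apply/ord_notinP; exists i.
Qed.

Lemma card_ord_lt n a : (a <= n)%N -> #|[pred i : 'I_n | (i < a)%N]| = a.
Proof.
move=> le_an; rewrite -sum1_card (eq_bigl (fun i : 'I_n => (i < a)%N)) //.
by rewrite (big_ord_narrow le_an) sum1_card card_ord.
Qed.

Section GlobalOffensiveAlliance.
Variables (T : finType) (e : rel T).

Lemma global_offensive_allianceE k (S : {set T}) :
  global_offensive_alliance e k S =
  (S != set0) && [forall v in ~: S, [exists u in S, e v u] &&
     ((delta e (~: S) v)%:Z + k <= (delta e S v)%:Z)].
Proof.
rewrite /global_offensive_alliance /offensive_alliance /dominating -andbA.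
congr (_ && _).
apply/andP/forall_inP => [[/forall_inP off /forall_inP dom] v vS | out].
  by rewrite dom //= off // inE vS dom.
split; apply/forall_inP => v; last by case/out/andP.
by rewrite inE => /andP[/out/andP[]].
Qed.

Lemma gamma_o_eq k m :
  (forall S : {set T}, global_offensive_alliance e k S -> (m <= #|S|)%N) ->
  (exists2 S : {set T}, global_offensive_alliance e k S & #|S| = m) ->
  gamma_o e k = m.
Proof.
move=> lb [S0 S0all m_eq]; subst m.
apply/eqP; rewrite eqn_leq /gamma_o bigmin_le //=.
elim/big_ind: _ => [|x y|S /lb //]; first exact: max_card.
by rewrite leq_min => -> ->.
Qed.

End GlobalOffensiveAlliance.

Section CompleteBipartite.
Variables r t : nat.
Local Notation V := ('I_r + 'I_t)%type.
Local Notation K := (@Kbip r t).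

Definition left_card (S : {set V}) : nat := #|[pred i : 'I_r | inl i \in S]|.
Definition right_card (S : {set V}) : nat := #|[pred j : 'I_t | inr j \in S]|.

Lemma card_left_right (S : {set V}) : #|S| = (left_card S + right_card S)%N.
Proof. by rewrite -!sum1_card big_sumType /left_card /right_card -!sum1_card. Qed.

Lemma left_card_le (S : {set V}) : (left_card S <= r)%N.
Proof. by have := max_card (mem [pred i : 'I_r | inl i \in S]); rewrite card_ord. Qed.

Lemma right_card_le (S : {set V}) : (right_card S <= t)%N.
Proof. by have := max_card (mem [pred j : 'I_t | inr j \in S]); rewrite card_ord. Qed.

Lemma left_card_setC (S : {set V}) : left_card (~: S) = (r - left_card S)%N.
Proof. by rewrite -card_ord_predC; apply: eq_card => i; rewrite !inE. Qed.

Lemma right_card_setC (S : {set V}) : right_card (~: S) = (t - right_card S)%N.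
Proof. by rewrite -card_ord_predC; apply: eq_card => j; rewrite !inE. Qed.

Lemma delta_inl (S : {set V}) i : delta K S (inl i) = right_card S.
Proof.
rewrite /delta card_left_right /left_card /right_card.
rewrite (@eq_card _ _ pred0) ?card0 => [|j]; last by rewrite !inE andbF.
by apply: eq_card => j; rewrite !inE andbT.
Qed.

Lemma delta_inr (S : {set V}) j : delta K S (inr j) = left_card S.
Proof.
rewrite /delta card_left_right /left_card /right_card addnC.
rewrite (@eq_card _ _ pred0) ?card0 => [|i]; last by rewrite !inE andbF.
by apply: eq_card => i; rewrite !inE andbT.
Qed.

Lemma exists_neighbour_inl (S : {set V}) i :
  [exists u in S, K (inl i) u] = (0 < right_card S)%N.
Proof.
rewrite -(delta_inl S i) card_gt0.
by apply/existsP/set0Pn => -[u u_nbr]; exists u; rewrite inE in u_nbr *.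
Qed.

Lemma exists_neighbour_inr (S : {set V}) j :
  [exists u in S, K (inr j) u] = (0 < left_card S)%N.
Proof.
rewrite -(delta_inr S j) card_gt0.
by apply/existsP/set0Pn => -[u u_nbr]; exists u; rewrite inE in u_nbr *.
Qed.

(* A vertex with n neighbours, b of them in S, satisfies both requirements iff
   b >= 1 and b >= (n - b) + k. *)
Definition dominated_k (n : nat) (k : int) (b : nat) : bool :=
  (0 < b)%N && (n%:Z + k <= 2 * b%:Z).

Definition bip_alliance (k : int) (a b : nat) : bool :=
  [&& (0 < a + b)%N, (a == r) || dominated_k t k b
    & (b == t) || dominated_k r k a].

Lemma outside_inl k (S : {set V}) i :
  [exists u in S, K (inl i) u] &&
    ((delta K (~: S) (inl i))%:Z + k <= (delta K S (inl i))%:Z) =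
  dominated_k t k (right_card S).
Proof.
rewrite exists_neighbour_inl !delta_inl right_card_setC /dominated_k.
have := right_card_le S; case: (0 < right_card S)%N; lia.
Qed.

Lemma outside_inr k (S : {set V}) j :
  [exists u in S, K (inr j) u] &&
    ((delta K (~: S) (inr j))%:Z + k <= (delta K S (inr j))%:Z) =
  dominated_k r k (left_card S).
Proof.
rewrite exists_neighbour_inr !delta_inr left_card_setC /dominated_k.
have := left_card_le S; case: (0 < left_card S)%N; lia.
Qed.

Lemma global_offensive_alliance_Kbip k (S : {set V}) :
  global_offensive_alliance K k S = bip_alliance k (left_card S) (right_card S).
Proof.
rewrite global_offensive_allianceE -card_gt0 card_left_right /bip_alliance.
congr (_ && _); transitivity
  ([forall i : 'I_r, (inl i \notin S) ==> dominated_k t k (right_card S)] &&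
   [forall j : 'I_t, (inr j \notin S) ==> dominated_k r k (left_card S)]).
  apply/forall_inP/andP => [out | [/forallP outl /forallP outr] [i|j]].
    split; apply/forallP => v; apply/implyP => vS;
      [rewrite -(outside_inl k S v) | rewrite -(outside_inr k S v)];
      by apply: out; rewrite inE.
  - by rewrite inE outside_inl => /(implyP (outl i)).
  - by rewrite inE outside_inr => /(implyP (outr j)).
by rewrite !forall_notin_ord.
Qed.

Definition bip_set (a b : nat) : {set V} :=
  [set x : V | match x with inl i => (i < a)%N | inr j => (j < b)%N end].

Lemma left_card_bip_set a b : (a <= r)%N -> left_card (bip_set a b) = a.
Proof.
by move=> le_ar; rewrite -[RHS](card_ord_lt le_ar); apply: eq_card => i; rewrite !inE.
Qed.

Lemma right_card_bip_set a b : (b <= t)%N -> right_card (bip_set a b) = b.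
Proof.
by move=> le_bt; rewrite -[RHS](card_ord_lt le_bt); apply: eq_card => j; rewrite !inE.
Qed.

Lemma gamma_o_Kbip_eq k m :
  (forall a b, (a <= r)%N -> (b <= t)%N ->
     bip_alliance k a b -> (m <= a + b)%N) ->
  (exists a b, [/\ (a <= r)%N, (b <= t)%N, bip_alliance k a b & (a + b = m)%N]) ->
  gamma_o K k = m.
Proof.
move=> lb [a [b [le_ar le_bt ab_all ab_m]]]; apply: gamma_o_eq => [S|].
  rewrite global_offensive_alliance_Kbip card_left_right.
  by apply: lb; [apply: left_card_le | apply: right_card_le].
exists (bip_set a b);
  last by rewrite card_left_right left_card_bip_set ?right_card_bip_set.
by rewrite global_offensive_alliance_Kbip left_card_bip_set ?right_card_bip_set.
Qed.

End CompleteBipartite.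

Theorem mainTheorem1 (r t : nat) (k : int) :
  (0 < t)%N -> (t <= r)%N ->
  2 - r%:Z <= k -> k <= r%:Z ->
  let g := (@gamma_o _ (@Kbip r t) k)%:Z in
  let c := ceil2 (r%:Z + k) + ceil2 (t%:Z + k) in
  (t%:Z + 1 <= k -> g = r%:Z) /\
  (k <= t%:Z -> t%:Z <= c -> g = t%:Z) /\
  (- t%:Z < k -> k <= t%:Z -> c < t%:Z -> g = c) /\
  (k <= - t%:Z -> c < t%:Z -> g = Num.min t%:Z (1 + ceil2 (r%:Z + k))).
Proof.
move=> t_gt0 le_tr k_ge k_le g c; rewrite {}/g {}/c.
have := ceil2_bounds (r%:Z + k); have := ceil2_bounds (t%:Z + k).
move: (ceil2 (r%:Z + k)) (ceil2 (t%:Z + k)) => cr ct ctP crP.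
have gammaE m a b : (forall a' b', (a' <= r)%N -> (b' <= t)%N ->
    bip_alliance r t k a' b' -> (m <= a' + b')%N) ->
    (a <= r)%N -> (b <= t)%N -> bip_alliance r t k a b -> (a + b = m)%N ->
    (gamma_o (@Kbip r t) k)%:Z = m%:Z.
  by move=> lb *; rewrite (gamma_o_Kbip_eq lb); last by exists a, b.
rewrite /bip_alliance /dominated_k in gammaE.
split; [|split; [|split]].
- by move=> *; apply: (gammaE r r 0%N) => *; lia.
- by move=> *; apply: (gammaE t 0%N t) => *; lia.
- by move=> *; rewrite (gammaE (absz (cr + ct)) (absz cr) (absz ct)) => *; lia.
- move=> *; have [le_t|lt_t] := leP t%:Z (1 + cr).
    by rewrite (gammaE t 0%N t) => *; lia.
  by rewrite (gammaE (absz (1 + cr)) (absz cr) 1%N) => *; lia.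
Qed.
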